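(* Let $M$ be a matroid on a finite ground set. Then $M$ is a BUMAC matroid (i.e., there exist $m\ge 1$, a finite set $\mathcal{Y}$ and a binary MAC $W\in M(\mathcal{Y}\mid\mathbb{F}_2^m)$ such that $M$ is isomorphic to the matroid on $E_m=\{1,\dots,m\}$ with rank function $r(S)=I(X[S];Y,X[S^c])$) if and only if $M$ is binary (i.e., representable over $\mathbb{F}_2$).
   Context: A binary MAC with $m$ users is a channel $W$ with input alphabet $\mathbb{F}_2^m$ and finite output alphabet $\mathcal{Y}$, i.e., a family of probability distributions $W(\cdot\mid x)$ on $\mathcal{Y}$, $x\in\mathbb{F}_2^m$. Let $E_m=\{1,\dots,m\}$. Let $X[E_m]=(X[1],\dots,X[m])$ have i.i.d. uniform components on $\mathbb{F}_2$ and let $Y$ be the output of $W$ with input $X[E_m]$, so $(X[E_m],Y)$ has joint law $2^{-m}W(y\mid x)$. For $S\subseteq E_m$, $X[S]=(X[i])_{i\in S}$ and $S^c=E_m\setminus S$. Mutual information is measured in bits (logarithm base 2). The uniform mutual information function (UMIF) of $W$ is $S\mapsto I(X[S];Y,X[S^c])$; a matroid is called BUMAC if its rank function is, up to isomorphism, the UMIF of some binary MAC. A matroid is binary if it is isomorphic to the vector matroid of a matrix over $\mathbb{F}_2$ (ground set = column indices, independent sets = linearly independent column sets). *)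

From HB Require Import structures.
From mathcomp Require Import all_boot all_order all_algebra.
From mathcomp Require Import Rstruct exp.
Set Implicit Arguments. Unset Strict Implicit. Unset Printing Implicit Defensive.
Import Order.TTheory GRing.Theory Num.Theory.
Local Open Scope ring_scope.

Notation RR := Rdefinitions.R.

Definition is_matroid (T : finType) (indep : {set T} -> bool) : Prop :=
  [/\ indep set0,
      (forall A B : {set T}, B \subset A -> indep A -> indep B) &
      (forall A B : {set T}, indep A -> indep B -> (#|A| < #|B|)%N ->
         exists2 x, x \in B :\: A & indep (x |: A))].

Definition mrank (T : finType) (indep : {set T} -> bool) (S : {set T}) : nat :=
  \max_(A : {set T} | (A \subset S) && indep A) #|A|.

Definition cols_lin_indep (n k : nat) (A : 'M['F_2]_(n, k)) (C : {set 'I_k}) : Prop :=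
  forall c : 'I_k -> 'F_2,
    \sum_(j in C) c j *: col j A = 0 -> forall j, j \in C -> c j = 0.

Definition binary_matroid (T : finType) (indep : {set T} -> bool) : Prop :=
  exists (n k : nat) (A : 'M['F_2]_(n, k)) (f : T -> 'I_k),
    bijective f /\ forall S : {set T}, indep S <-> cols_lin_indep A (f @: S).

Definition log2 (x : RR) : RR := ln x / ln (2 : RR).

(* Mutual information I(X;Z) (in bits) of random variables X, Z defined on a
   finite sample space U carrying the probability mass function P,
   with the convention 0 log 0 = 0. *)
Definition mutual_info (U A B : finType) (P : U -> RR)
    (X : U -> A) (Z : U -> B) : RR :=
  \sum_(a : A) \sum_(b : B)
    let pab := \sum_(u | (X u == a) && (Z u == b)) P u in
    let pa := \sum_(u | X u == a) P u in
    let pb := \sum_(u | Z u == b) P u in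
    if pab == 0 then 0 else pab * log2 (pab / (pa * pb)).

Definition inputs (m : nat) := {ffun 'I_m -> 'F_2}.

Definition is_binary_MAC (m : nat) (Y : finType) (W : inputs m -> Y -> RR) : Prop :=
  (forall x y, 0 <= W x y) /\ (forall x, \sum_(y : Y) W x y = 1).

(* X[S], encoded as the vector equal to X on S and 0 off S
   (an injective encoding of the restriction (X[i])_{i in S}). *)
Definition restr (m : nat) (S : {set 'I_m}) (x : inputs m) : inputs m :=
  [ffun i => if i \in S then x i else 0].

(* Uniform mutual information function: S |-> I(X[S]; Y, X[S^c]) where
   (X, Y) has joint law 2^{-m} W(y | x). *)
Definition UMIF (m : nat) (Y : finType) (W : inputs m -> Y -> RR)
    (S : {set 'I_m}) : RR :=
  mutual_info (fun u : inputs m * Y => (2 ^+ m)^-1 * W u.1 u.2)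
    (fun u => restr S u.1)
    (fun u => (u.2, restr (~: S) u.1)).

Definition BUMAC (T : finType) (indep : {set T} -> bool) : Prop :=
  exists (m : nat), (0 < m)%N /\
  exists (Y : finType) (W : inputs m -> Y -> RR),
    is_binary_MAC W /\
    exists f : T -> 'I_m, bijective f /\
      forall S : {set T}, (mrank indep S)%:R = UMIF W (f @: S).

From mathcomp Require Import all_boot all_order all_algebra.
From mathcomp Require Import Rstruct exp.
From mathcomp Require Import ring lra zify.
From Stdlib Require Import Classical.
Set Implicit Arguments. Unset Strict Implicit. Unset Printing Implicit Defensive.
Import Order.TTheory GRing.Theory Num.Theory.
Local Open Scope ring_scope.

(* With uniform inputs, X[S] is uniform on F_2^S, so UMIF S = |S| - H(X[S] | Y, X[S^c]).
   If the UMIF is the rank function of M, an independent set S has zero conditional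
   entropy: on the support of W the inputs in S are recovered from the output and the
   other inputs.  For a circuit C every C \ j is independent, so each fibre of X[C]
   over (Y, X[C^c]) has at most two points, and conditional entropy 1 forces exactly
   two: the support of W is invariant under adding the indicator of C, hence under the
   F_2-span L of all circuit indicators.  M is then the vector matroid of a matrix whose
   column relations are exactly L.  Conversely, the deterministic channel y = A x has
   UMIF S = |S| - log2 #{a in ker A supported on S} = rank S. *)

Lemma F2_cases (s : 'F_2) : s = 0 \/ s = 1.
Proof. by case: s => [[|[|n]]] // Hs; [left|right]; apply/val_inj. Qed.

Lemma F2_neq_addr1 (a b : 'F_2) : a != b -> a = b + 1.
Proof.
by case: (F2_cases a) => ->; case: (F2_cases b) => -> // _; apply/val_inj.
Qed.

Lemma card_F2 : #|'F_2| = 2%N.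
Proof. by rewrite card_Fp. Qed.

Lemma card_inputs m : #|{: inputs m}| = (2 ^ m)%N.
Proof. by rewrite card_ffun card_F2 card_ord. Qed.

Lemma restrE m (D : {set 'I_m}) x i : restr D x i = if i \in D then x i else 0.
Proof. by rewrite ffunE. Qed.

Lemma restr_id m (D : {set 'I_m}) x : restr D (restr D x) = restr D x.
Proof. by apply/ffunP => i; rewrite !restrE; case: (i \in D). Qed.

Lemma restrB m (D : {set 'I_m}) x y : restr D (x - y) = restr D x - restr D y.
Proof. by apply/ffunP => i; rewrite !ffunE; case: (i \in D); rewrite ?subr0. Qed.

Lemma restr_splitC m (D : {set 'I_m}) x : restr D x + restr (~: D) x = x.
Proof.
apply/ffunP => i; rewrite ffunE !restrE inE.
by case: (i \in D) => /=; rewrite ?addr0 ?add0r.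
Qed.

Lemma restrC_idE m (D : {set 'I_m}) w : (restr (~: D) w == w) = (restr D w == 0).
Proof.
have := restr_splitC D w; set u := restr D w; set v := restr (~: D) w => Euv.
apply/eqP/eqP => E; last by rewrite -Euv E add0r.
by move: Euv; rewrite E => /(canRL (addrK w)); rewrite subrr.
Qed.

Definition ind m (D : {set 'I_m}) : inputs m := [ffun i => if i \in D then 1 else 0].

Lemma card_restr_fixed m (D : {set 'I_m}) :
  #|[set x : inputs m | restr D x == x]| = (2 ^ #|D|)%N.
Proof.
have -> : (2 ^ #|D| = #|'F_2| ^ #|D|)%N by rewrite card_F2.
rewrite -(card_pffun_on 0 D (predT : {pred 'F_2})).
apply: eq_card => x; rewrite inE; apply/eqP/pffun_onP.
  move=> Hx; split => //; apply/subsetP => i; rewrite inE => Hi.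
  by apply: contraNT Hi => Hi; rewrite -Hx restrE (negbTE Hi).
move=> [Hs _]; apply/ffunP => i; rewrite restrE; case: ifP => // Hi.
by apply/eqP; apply: contraFT Hi => Hi; apply: (subsetP Hs); rewrite inE eq_sym.
Qed.

Lemma card_restr_fibre m (D : {set 'I_m}) (a : inputs m) : restr D a = a ->
  #|[set x : inputs m | restr D x == a]| = (2 ^ (m - #|D|))%N.
Proof.
move=> Ha.
have -> : (m - #|D| = #|~: D|)%N by have := cardsC D; rewrite card_ord; lia.
rewrite -card_restr_fixed -[LHS](card_imset _ (addIr (- a))); apply: eq_card => w.
apply/imsetP/idP.
  by move=> [x]; rewrite inE => /eqP Hx ->; rewrite inE restrC_idE restrB Hx Ha subrr.
rewrite inE => Hw; exists (w + a); last by rewrite addrK.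
by rewrite inE -[a in _ == a]Ha -subr_eq0 -restrB addrK -restrC_idE.
Qed.

Local Notation ln2 := (ln (2 : RR)).

Lemma ln2_gt0 : 0 < ln2.
Proof. by apply: ln_gt0; rewrite ltr1n. Qed.

Lemma log2_le0 (t : RR) : t <= 1 -> log2 t <= 0.
Proof. by move=> Ht; rewrite /log2 pmulr_lle0 ?invr_gt0 ?ln2_gt0 // ln_le0. Qed.

Lemma log2_1 : log2 1 = 0.
Proof. by rewrite /log2 ln1 mul0r. Qed.

Lemma log2_eq0 (t : RR) : 0 < t -> (log2 t == 0) = (t == 1).
Proof. by move=> Ht; rewrite /log2 mulf_eq0 invr_eq0 (gt_eqF ln2_gt0) orbF ln_eq0. Qed.

Lemma log2V (t : RR) : 0 < t -> log2 t^-1 = - log2 t.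
Proof. by move=> Ht; rewrite /log2 lnV ?posrE // mulNr. Qed.

Lemma log2_M2X (n : nat) (t : RR) : 0 < t -> log2 (2 ^+ n * t) = n%:R + log2 t.
Proof.
move=> Ht; rewrite /log2 lnM ?posrE ?exprn_gt0 // lnXn // mulrDl.
have H2 := ln2_gt0; rewrite -[_ *+ n]mulr_natr.
by field; rewrite gt_eqF.
Qed.

Lemma log2_2X (n : nat) : log2 (2 ^+ n) = n%:R.
Proof. by rewrite -[2 ^+ n]mulr1 log2_M2X // log2_1 addr0. Qed.

Lemma ln_ge_1_subV (t : RR) : 0 < t -> 1 - t^-1 <= ln t.
Proof.
move=> Ht; have := @le_ln1Dx _ (t^-1 - 1); rewrite (addrC 1) subrK lnV ?posrE //.
have : 0 < t^-1 by rewrite invr_gt0.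
lra.
Qed.

(* [ln t >= 1 - 1/t] at [t = 2 s / p]: Gibbs' inequality against the uniform law
   on two atoms. *)
Lemma xlog2_ge (s p : RR) : 0 < s -> 0 < p ->
  - (s * log2 (s / p)) <= s - s / ln2 + p / (2 * ln2).
Proof.
move=> Hs Hp; have Hl2 := ln2_gt0.
have Ht : 0 < 2 * (s / p) by rewrite mulr_gt0 ?divr_gt0.
have := ln_ge_1_subV Ht; rewrite lnM ?posrE ?divr_gt0 // => Hln.
have key : s - p / 2 <= s * (ln2 + ln (s / p)).
  have := ler_wpM2l (ltW Hs) Hln.
  suff -> : s * (1 - (2 * (s / p))^-1) = s - p / 2 by [].
  by field; rewrite !gt_eqF.
rewrite -(ler_pM2r Hl2) /log2.
have -> : - (s * (ln (s / p) / ln2)) * ln2 = - (s * ln (s / p)) by field; rewrite gt_eqF.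
have -> : (s - s / ln2 + p / (2 * ln2)) * ln2 = s * ln2 - s + p / 2.
  by field; rewrite gt_eqF.
lra.
Qed.

Lemma entropy_two_atoms_le (I : finType) (s : I -> RR) :
  (forall i, 0 <= s i) -> (#|[pred i | s i != 0%R]| <= 2)%N ->
  \sum_i (if s i == 0 then 0 else - (s i * log2 (s i / \sum_j s j))) <= \sum_j s j.
Proof.
move=> Hs0 Hcard; set p := \sum_j s j.
have [Hp0|Hp] := eqVneq p 0.
  rewrite Hp0 big1 // => i _.
  have -> : s i = 0 by apply: (psumr_eq0P (P := xpredT) _ Hp0).
  by rewrite eqxx.
have Hpos : 0 < p by rewrite lt_def Hp sumr_ge0.
set c := p / (2 * ln2).
have Hc : 0 <= c by rewrite divr_ge0 ?mulr_ge0 ?ltW ?ln2_gt0.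
apply: (@le_trans _ _ (\sum_i (s i - s i / ln2 + (if s i != 0 then c else 0)))).
  apply: ler_sum => i _; have [->|Hn] := eqVneq (s i) 0.
    by rewrite mul0r subrr addr0.
  by apply: xlog2_ge => //; rewrite lt_def Hn Hs0.
rewrite big_split sumrB -mulr_suml -/p -big_mkcond sumr_const /=.
have : c *+ #|[pred i | s i != 0]| <= c *+ 2 by rewrite ler_wpMn2l.
have -> : c *+ 2 = p / ln2 by rewrite /c -mulr_natr; field; rewrite gt_eqF ?ln2_gt0.
lra.
Qed.

Definition recoverable m (Y : finType) (W : inputs m -> Y -> RR) (D : {set 'I_m}) :=
  forall y x x', W x y != 0 -> W x' y != 0 ->
    restr (~: D) x = restr (~: D) x' -> x = x'.

Section UniformInputs.
Variables (m : nat) (Y : finType) (W : inputs m -> Y -> RR).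
Hypothesis HW : is_binary_MAC W.
Variable B : {set 'I_m}.

Definition joint (u : inputs m * Y) : RR := (2 ^+ m)^-1 * W u.1 u.2.
Definition XB (u : inputs m * Y) := restr B u.1.
Definition ZB (u : inputs m * Y) := (u.2, restr (~: B) u.1).
Definition pXZ a b := \sum_(u | (XB u == a) && (ZB u == b)) joint u.
Definition pX a := \sum_(u | XB u == a) joint u.
Definition pZ b := \sum_(u | ZB u == b) joint u.
Definition condH_term a b :=
  if pXZ a b == 0 then 0 else - (pXZ a b * log2 (pXZ a b / pZ b)).
Definition condH := \sum_a \sum_b condH_term a b.

Lemma joint_ge0 u : 0 <= joint u.
Proof. by rewrite mulr_ge0 ?invr_ge0 ?exprn_ge0 //; case: HW. Qed.

Lemma joint_gt0 u : (0 < joint u) = (W u.1 u.2 != 0).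
Proof.
by rewrite lt_def joint_ge0 andbT mulf_eq0 invr_eq0 negb_or expf_neq0 ?pnatr_eq0.
Qed.

Lemma pXZ_ge0 a b : 0 <= pXZ a b.
Proof. by apply: sumr_ge0 => u _; exact: joint_ge0. Qed.

Lemma pXZ_ge_joint u : joint u <= pXZ (XB u) (ZB u).
Proof.
by rewrite /pXZ (bigD1 u) ?eqxx //= lerDl; apply: sumr_ge0 => v _; exact: joint_ge0.
Qed.

Lemma pZE b : pZ b = \sum_a pXZ a b.
Proof.
rewrite /pZ (partition_big XB xpredT) //; apply: eq_bigr => a _.
by apply: eq_bigl => u; rewrite andbC.
Qed.

Lemma pXZ_le_pZ a b : pXZ a b <= pZ b.
Proof.
by rewrite pZE (bigD1 a) //= lerDl; apply: sumr_ge0 => a' _; exact: pXZ_ge0.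
Qed.

Lemma sum_joint : \sum_u joint u = 1.
Proof.
rewrite /joint -(pair_big xpredT xpredT (fun x y => (2 ^+ m)^-1 * W x y)) /=.
under eq_bigr => x _ do rewrite -mulr_sumr (proj2 HW x) mulr1.
rewrite sumr_const card_inputs -[_ *+ _]mulr_natr natrX mulVf //.
by rewrite expf_neq0 // pnatr_eq0.
Qed.

Lemma sum_pZ : \sum_b pZ b = 1.
Proof. by rewrite -sum_joint (partition_big ZB xpredT). Qed.

Lemma sum_pXZ : \sum_a \sum_b pXZ a b = 1.
Proof. by rewrite exchange_big -sum_pZ; apply: eq_bigr => b _; rewrite pZE. Qed.

Lemma pXZ_witness a b : pXZ a b != 0 ->
  exists u, [/\ W u.1 u.2 != 0, XB u = a & ZB u = b].
Proof.
move=> Hab; have /existsP [u /and3P[Hu /eqP Ha /eqP Hb]] :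
    [exists u, [&& W u.1 u.2 != 0, XB u == a & ZB u == b]].
  apply: contraR Hab => /existsPn Hn; apply/eqP; apply: big1 => u /andP[Ha Hb].
  by move: (Hn u); rewrite Ha Hb !andbT negbK /joint => /eqP ->; rewrite mulr0.
by exists u.
Qed.

Lemma pX_fixed a : restr B a = a -> pX a = (2 ^+ #|B|)^-1.
Proof.
move=> Ha; rewrite /pX /joint /XB.
rewrite (eq_bigl (fun u : inputs m * Y => (restr B u.1 == a) && true)); last first.
  by move=> u; rewrite andbT.
rewrite -(pair_big_dep (fun x => restr B x == a) (fun _ _ => true)
  (fun x y => (2 ^+ m)^-1 * W x y)) /=.
under eq_bigr => x _ do rewrite -mulr_sumr (proj2 HW x) mulr1.
rewrite sumr_const -cardsE card_restr_fibre // -[_ *+ _]mulr_natr natrX.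
have Hle : (#|B| <= m)%N by rewrite -[X in (_ <= X)%N](card_ord m) max_card.
rewrite -{1}(subnK Hle) exprD invfM mulrAC mulVf ?mul1r //.
by rewrite expf_neq0 // pnatr_eq0.
Qed.

Lemma UMIF_condH : UMIF W B = #|B|%:R - condH.
Proof.
have -> : UMIF W B = \sum_a \sum_b
    (if pXZ a b == 0 then 0 else pXZ a b * log2 (pXZ a b / (pX a * pZ b))) by [].
have -> : (#|B|%:R : RR) = #|B|%:R * \sum_a \sum_b pXZ a b by rewrite sum_pXZ mulr1.
rewrite mulr_sumr -sumrB; apply: eq_bigr => a _.
rewrite mulr_sumr -sumrB; apply: eq_bigr => b _.
rewrite /condH_term; case: eqP => [->|/eqP Hn]; first by rewrite mulr0 subr0.
have Hp : 0 < pXZ a b by rewrite lt_def Hn pXZ_ge0.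
have Hpb : 0 < pZ b := lt_le_trans Hp (pXZ_le_pZ a b).
have [u [_ Hx _]] := pXZ_witness Hn.
rewrite pX_fixed; last by rewrite -Hx restr_id.
rewrite invfM invrK (mulrCA (pXZ a b) (2 ^+ #|B|)) log2_M2X ?divr_gt0 //.
by rewrite opprK; ring.
Qed.

Lemma condH_term_ge0 a b : 0 <= condH_term a b.
Proof.
rewrite /condH_term; case: eqP => // /eqP Hn.
have Hp : 0 < pXZ a b by rewrite lt_def Hn pXZ_ge0.
rewrite oppr_ge0 mulr_ge0_le0 ?pXZ_ge0 // log2_le0 //.
by rewrite ler_pdivrMr ?mul1r ?pXZ_le_pZ // (lt_le_trans Hp (pXZ_le_pZ a b)).
Qed.

Lemma condH_term_eq0 a b :
  (condH_term a b == 0) = (pXZ a b == 0) || (pXZ a b == pZ b).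
Proof.
rewrite /condH_term; have [->|Hn] := eqVneq (pXZ a b) 0; first by rewrite !eqxx.
have Hp : 0 < pXZ a b by rewrite lt_def Hn pXZ_ge0.
have Hpb : 0 < pZ b := lt_le_trans Hp (pXZ_le_pZ a b).
rewrite oppr_eq0 mulf_eq0 (negbTE Hn) log2_eq0 ?divr_gt0 //.
by apply/eqP/eqP => [/divr1_eq|->] //; rewrite divff ?gt_eqF.
Qed.

Lemma UMIF_card_recoverable : UMIF W B = #|B|%:R -> recoverable W B.
Proof.
rewrite UMIF_condH => HU; have H0 : condH = 0 by lra.
have Hterm a b : condH_term a b = 0.
  apply: (psumr_eq0P (P := xpredT)) => // [b' _|]; first exact: condH_term_ge0.
  apply: (psumr_eq0P (P := xpredT) (F := fun a => \sum_b condH_term a b) _ H0) => // a' _.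
  by apply: sumr_ge0 => b' _; exact: condH_term_ge0.
move=> y x x' Hx Hx' Hz; apply/eqP; apply: contraT => Hne.
set b := ZB (x, y); set a := XB (x, y); set a' := XB (x', y).
have Ha'a : a' != a.
  apply: contra Hne => /eqP; rewrite /a /a' /XB /= => Ha.
  by rewrite -(restr_splitC B x) -(restr_splitC B x') Ha Hz.
have Hb' : ZB (x', y) = b by rewrite /b /ZB /= Hz.
have Hpos := pXZ_ge_joint (x, y); have Hpos' := pXZ_ge_joint (x', y).
rewrite -/a -/b in Hpos; rewrite -/a' Hb' in Hpos'.
move: (joint_gt0 (x, y)) (joint_gt0 (x', y)); rewrite Hx Hx' /= => Hj Hj'.
have Hab : pXZ a b = pZ b.
  move/eqP: (Hterm a b); rewrite condH_term_eq0 => /orP[/eqP Hab|/eqP //]; lra.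
have : pXZ a b + pXZ a' b <= pZ b.
  rewrite pZE (bigD1 a) //= (bigD1 a') //= addrA lerDl.
  by apply: sumr_ge0 => ? _; exact: pXZ_ge0.
lra.
Qed.

End UniformInputs.

Section CircuitFibres.
Variables (m : nat) (Y : finType) (W : inputs m -> Y -> RR).
Hypothesis HW : is_binary_MAC W.
Variables (B : {set 'I_m}) (j0 : 'I_m).
Hypothesis j0B : j0 \in B.
Hypothesis recB : forall j, j \in B -> recoverable W (B :\ j).

(* [a |-> a j0] is injective on the support of a fibre, by recoverability of [B :\ j0]. *)
Lemma card_fibre_support_le2 b : (#|[pred a | pXZ W B a b != 0%R]| <= 2)%N.
Proof.
rewrite -[X in (_ <= X)%N]card_F2; apply: (@leq_card_in _ _ (fun a : inputs m => a j0)).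
move=> a a'; rewrite !inE => /pXZ_witness [u [Hu Ha Hb]].
move=> /pXZ_witness [u' [Hu' Ha' Hb']] Haj0.
have Hy : u'.2 = u.2 by rewrite -[u.2]/(ZB B u).1 -[u'.2]/(ZB B u').1 Hb Hb'.
suff Hxx : u.1 = u'.1 by rewrite -Ha -Ha' /XB Hxx.
apply: (recB j0B (y := u.2)) => //; first by rewrite -Hy.
apply/ffunP => i; rewrite !restrE !inE negb_and negbK.
have [->|Hij] := eqVneq i j0; first by move: Haj0; rewrite -Ha -Ha' !restrE j0B.
case HiB: (i \in B) => //=.
by move: Hb; rewrite -Hb' => -[_ /ffunP /(_ i)]; rewrite !restrE inE HiB.
Qed.

Lemma condH_fibre_le b : \sum_a condH_term W B a b <= pZ W B b.
Proof.
rewrite /condH_term pZE //; apply: entropy_two_atoms_le => [a|].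
  exact: pXZ_ge0.
exact: card_fibre_support_le2.
Qed.

(* [condH = 1 = \sum_b pZ b] and every fibre contributes at most [pZ b], so
   every fibre carries one bit and cannot be a single point. *)
Lemma circuit_partner : UMIF W B = #|B|%:R - 1 -> forall y x, W x y != 0 ->
  exists x', [/\ W x' y != 0, x' != x & restr (~: B) x' = restr (~: B) x].
Proof.
rewrite UMIF_condH // => HU.
have Hgap : \sum_b (pZ W B b - \sum_a condH_term W B a b) = 0.
  rewrite sumrB sum_pZ //.
  have -> : \sum_b \sum_a condH_term W B a b = condH W B by rewrite exchange_big.
  lra.
have Hfibre b : \sum_a condH_term W B a b = pZ W B b.
  apply/eqP; rewrite eq_sym -subr_eq0; apply/eqP.
  apply: (psumr_eq0P (P := xpredT) _ Hgap) => // b' _.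
  by rewrite subr_ge0 condH_fibre_le.
move=> y x Hx; set b := ZB B (x, y); set a := XB B (x, y).
have Hpb : 0 < pZ W B b.
  apply: lt_le_trans (pXZ_le_pZ HW B a b).
  by apply: lt_le_trans (pXZ_ge_joint HW B (x, y)); rewrite joint_gt0.
case: (boolP [exists x', [&& W x' y != 0, x' != x &
                         restr (~: B) x' == restr (~: B) x]]).
  by move=> /existsP [x' /and3P[H1 H2 /eqP H3]]; exists x'.
move=> /existsPn Hn; exfalso.
have Hz a' : a' != a -> pXZ W B a' b = 0.
  move=> Ha'; apply/eqP; apply: contraT => /pXZ_witness [u [Hu Hxu Hzu]].
  have [Hy Hr] : u.2 = y /\ restr (~: B) u.1 = restr (~: B) x by case: Hzu.
  move: (Hn u.1); rewrite -Hy Hu Hr eqxx andbT /= negbK => /eqP Hux.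
  by move: Ha'; rewrite -Hxu /XB Hux eqxx.
have Hab : pXZ W B a b = pZ W B b.
  by rewrite pZE // (bigD1 a) //= big1 ?addr0 // => a' /Hz.
have H0 : condH_term W B a b = 0.
  by apply/eqP; rewrite (condH_term_eq0 HW) Hab eqxx orbT.
have : \sum_a' condH_term W B a' b = 0.
  rewrite (bigD1 a) //= H0 add0r big1 // => a' /Hz Ha'.
  by rewrite /condH_term Ha' eqxx.
by rewrite Hfibre => Hp0; move: Hpb; rewrite Hp0 ltxx.
Qed.

Lemma support_addr_ind : UMIF W B = #|B|%:R - 1 -> forall y x, W x y != 0 ->
  W (x + ind B) y != 0.
Proof.
move=> HU y x Hx; have [x' [Hx' Hne Hr]] := circuit_partner HU Hx.
suff -> : x + ind B = x' by [].
apply/ffunP => i; rewrite !ffunE.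
case HiB: (i \in B); last first.
  by rewrite addr0; move/ffunP: Hr => /(_ i); rewrite !restrE inE HiB.
have [Heq|Hneq] := eqVneq (x' i) (x i); last by rewrite (F2_neq_addr1 Hneq).
exfalso; move/eqP: Hne; apply; apply: (recB HiB Hx' Hx); apply/ffunP => k.
rewrite !restrE !inE negb_and negbK; have [->|Hki] //= := eqVneq k i.
case HkB: (k \in B) => //=.
by move/ffunP: Hr => /(_ k); rewrite !restrE inE HkB.
Qed.

End CircuitFibres.

Section MatroidRank.
Variables (T : finType) (indep : {set T} -> bool).
Hypothesis HM : is_matroid indep.

Lemma indep_set0 : indep set0. Proof. by case: HM. Qed.

Lemma mrank_le_card (S : {set T}) : (mrank indep S <= #|S|)%N.
Proof. by apply/bigmax_leqP => A /andP[HA _]; exact: subset_leq_card. Qed.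

Lemma indep_card_le_mrank (S A : {set T}) :
  A \subset S -> indep A -> (#|A| <= mrank indep S)%N.
Proof.
by move=> HA HiA; apply: (@leq_bigmax_cond _ _ (fun A : {set T} => #|A|)); rewrite HA HiA.
Qed.

Lemma mrank_indep (S : {set T}) : indep S -> mrank indep S = #|S|.
Proof. by move=> HS; apply/eqP; rewrite eqn_leq mrank_le_card indep_card_le_mrank. Qed.

Lemma mrank_witness (S : {set T}) :
  exists2 A : {set T}, (A \subset S) && indep A & mrank indep S = #|A|.
Proof.
have Hc : (0 < #|[pred A : {set T} | (A \subset S) && indep A]|)%N.
  by apply/card_gt0P; exists set0; rewrite inE sub0set indep_set0.
have [A0 HA0 Hmax] := eq_bigmax_cond (fun A : {set T} => #|A|) Hc.
by exists A0; [move: HA0; rewrite inE | rewrite -Hmax].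
Qed.

Lemma mrank_card_indep (S : {set T}) : mrank indep S = #|S| -> indep S.
Proof.
have [A /andP[HAS HA] ->] := mrank_witness S => Hc.
have := subset_leqif_cards HAS; rewrite Hc => -[_].
by rewrite eqxx => /esym /eqP <-.
Qed.

Definition circuit (C : {set T}) := minset (fun B => ~~ indep B) C.

Lemma circuit_dep (C : {set T}) : circuit C -> ~~ indep C.
Proof. by case/minsetP. Qed.

Lemma circuit_indepD1 (C : {set T}) x : circuit C -> x \in C -> indep (C :\ x).
Proof.
case/minsetP => _ Hmin Hx; apply: contraT => Hd.
have := Hmin _ Hd (subsetDl _ _) => /setP /(_ x).
by rewrite !inE eqxx Hx.
Qed.

Lemma circuit_nonempty (C : {set T}) : circuit C -> exists x, x \in C.
Proof.
move=> Hc; have [E|[x Hx]] := set_0Vmem C; last by exists x.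
by move: (circuit_dep Hc); rewrite E indep_set0.
Qed.

Lemma mrank_circuit (C : {set T}) : circuit C -> mrank indep C = (#|C| - 1)%N.
Proof.
move=> Hc; have [x Hx] := circuit_nonempty Hc.
apply/eqP; rewrite eqn_leq; apply/andP; split.
  have : mrank indep C != #|C|.
    by apply: contraNneq (circuit_dep Hc) => /mrank_card_indep.
  have := mrank_le_card C; lia.
rewrite (cardsD1 x C) Hx add1n subn1 /=.
by rewrite indep_card_le_mrank ?subsetDl ?circuit_indepD1.
Qed.

Lemma dep_circuit_sub (S : {set T}) : ~~ indep S -> exists2 C, circuit C & C \subset S.
Proof. by move=> /(@minset_exists _ (fun B => ~~ indep B)) [C HC HCS]; exists C. Qed.

End MatroidRank.

Lemma imsetD1_inj (aT rT : finType) (f : aT -> rT) (A : {set aT}) x :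
  injective f -> f @: (A :\ x) = f @: A :\ f x.
Proof.
move=> finj; apply/setP => j; rewrite !inE; apply/imsetP/andP.
  move=> [z]; rewrite !inE => /andP[Hzx Hz] ->.
  by rewrite (inj_eq finj) Hzx imset_f.
move=> [Hj /imsetP [z Hz Ej]]; exists z => //; rewrite !inE Hz andbT.
by apply: contra Hj => /eqP Hzx; rewrite Ej Hzx.
Qed.

Lemma MAC_support m (Y : finType) (W : inputs m -> Y -> RR) x :
  is_binary_MAC W -> exists y, W x y != 0.
Proof.
move=> [_ /(_ x) HW1]; apply/existsP; apply: contraT => /existsPn Hn.
by move: HW1; rewrite big1 => [/eqP|y _]; [rewrite eq_sym oner_eq0 | apply/eqP/negPn].
Qed.

Definition rv m (x : inputs m) : 'rV['F_2]_m := \row_j x j.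
Definition fv m (v : 'rV['F_2]_m) : inputs m := [ffun j => v 0 j].

Lemma fv_rv m (x : inputs m) : fv (rv x) = x.
Proof. by apply/ffunP => j; rewrite ffunE mxE. Qed.

Lemma fv0 m : fv (0 : 'rV['F_2]_m) = 0.
Proof. by apply/ffunP => j; rewrite !ffunE mxE. Qed.

Lemma fvD m (a b : 'rV['F_2]_m) : fv (a + b) = fv a + fv b.
Proof. by apply/ffunP => j; rewrite !ffunE mxE. Qed.

Lemma sum_col_trcoker_eq0 n k (L : 'M['F_2]_(n, k)) (D : {set 'I_k})
    (c : 'I_k -> 'F_2) :
  (\sum_(j in D) c j *: col j (cokermx L)^T == 0) = (rv (restr D (finfun c)) <= L)%MS.
Proof.
rewrite submxE.
have E1 i l : (\sum_(j in D) c j *: col j (cokermx L)^T) i l =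
    \sum_(j in D) c j * cokermx L j i.
  by rewrite summxE; apply: eq_bigr => j _; rewrite !mxE.
have E2 l i : (rv (restr D (finfun c)) *m cokermx L) l i =
    \sum_(j in D) c j * cokermx L j i.
  rewrite mxE [RHS]big_mkcond /=; apply: eq_bigr => j _.
  by rewrite !mxE !ffunE; case: ifP => //; rewrite mul0r.
apply/eqP/eqP => H; apply/matrixP => i l.
  by rewrite E2 -(E1 _ 0) H !mxE.
by rewrite E1 -(E2 0) H !mxE.
Qed.

Section BUMACBinary.
Variables (T : finType) (indep : {set T} -> bool).
Hypothesis HM : is_matroid indep.
Variables (m : nat) (Y : finType) (W : inputs m -> Y -> RR).
Hypothesis HW : is_binary_MAC W.
Variable f : T -> 'I_m.
Hypothesis Hf : bijective f.
Hypothesis Hr : forall S, (mrank indep S)%:R = UMIF W (f @: S).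

Let finj : injective f := bij_inj Hf.

Lemma indep_recoverable S : indep S -> recoverable W (f @: S).
Proof.
move=> HS; apply: (UMIF_card_recoverable HW).
by rewrite -Hr mrank_indep // card_imset.
Qed.

Lemma circuit_support_addr_ind C : circuit indep C -> forall y x, W x y != 0 ->
  W (x + ind (f @: C)) y != 0.
Proof.
move=> HC; have [c0 Hc0] := circuit_nonempty HM HC.
apply: (support_addr_ind HW (imset_f f Hc0)).
  move=> _ /imsetP [c Hc ->]; rewrite -imsetD1_inj //.
  exact/indep_recoverable/circuit_indepD1.
have Hc1 : (1 <= #|C|)%N by apply/card_gt0P; exists c0.
by rewrite -Hr mrank_circuit // card_imset // natrB.
Qed.

Definition circuit_mx : 'M['F_2]_(#|{: {set T}}|, m) :=
  \matrix_(i, j) (if circuit indep (enum_val i) then ind (f @: enum_val i) j else 0).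

Lemma row_circuit_mx C :
  row (enum_rank C) circuit_mx = rv (if circuit indep C then ind (f @: C) else 0).
Proof. by apply/rowP => j; rewrite !mxE enum_rankK; case: ifP => //; rewrite ffunE. Qed.

Lemma support_addr_span v : (v <= circuit_mx)%MS ->
  forall y x, W x y != 0 -> W (x + fv v) y != 0.
Proof.
case/submxP => D ->; rewrite mulmx_sum_row.
pose closed (w : 'rV['F_2]_m) := forall y x, W x y != 0 -> W (x + fv w) y != 0.
apply: (big_ind closed).
- by move=> y x Hx; rewrite fv0 addr0.
- by move=> a b Ha Hb y x Hx; rewrite fvD addrA; apply/Hb/Ha.
move=> i _ y x Hx; have [->|->] := F2_cases (D 0 i); first by rewrite scale0r fv0 addr0.
rewrite scale1r -[i]enum_valK row_circuit_mx fv_rv; case: ifP => HC.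
  exact: circuit_support_addr_ind.
by rewrite addr0.
Qed.

Lemma BUMAC_binary : binary_matroid indep.
Proof.
have [y0 Hy0] := MAC_support 0 HW.
exists m, m, (cokermx circuit_mx)^T, f; split => // S; split.
  move=> HS c /eqP; rewrite sum_col_trcoker_eq0 => /support_addr_span /(_ y0 0 Hy0).
  rewrite fv_rv add0r => Hc j Hj.
  have := indep_recoverable HS Hc Hy0.
  have -> : restr (~: (f @: S)) (restr (f @: S) (finfun c)) = restr (~: (f @: S)) 0.
    by apply/ffunP => i; rewrite !ffunE inE; case: (i \in f @: S).
  by move=> /(_ erefl) /ffunP /(_ j); rewrite !ffunE Hj.
move=> Hcols; apply: contraT => HnS.
have [C HC HCS] := dep_circuit_sub HnS.
have [c0 Hc0] := circuit_nonempty HM HC.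
have Hfc0 : f c0 \in f @: S by rewrite imset_f // (subsetP HCS).
suff /Hcols /(_ _ Hfc0) :
    \sum_(j in f @: S) ind (f @: C) j *: col j (cokermx circuit_mx)^T = 0.
  by rewrite ffunE imset_f // => /eqP; rewrite oner_eq0.
apply/eqP; rewrite sum_col_trcoker_eq0.
have -> : restr (f @: S) (finfun (fun j => ind (f @: C) j)) = ind (f @: C).
  apply/ffunP => j; rewrite !ffunE; case: ifP => // HjS.
  by case: ifP => // HjC; move: HjS; rewrite (subsetP (imsetS f HCS)).
by have := row_sub (enum_rank C) circuit_mx; rewrite row_circuit_mx HC.
Qed.

End BUMACBinary.

Definition cv k (x : inputs k) : 'cV['F_2]_k := \col_j x j.

Lemma cvB k (x y : inputs k) : cv (x - y) = cv x - cv y.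
Proof. by apply/matrixP => i j; rewrite !mxE !ffunE. Qed.

Lemma mul_cv n k (A : 'M['F_2]_(n, k)) (w : inputs k) :
  A *m cv w = \sum_j w j *: col j A.
Proof.
apply/matrixP => i l; rewrite !mxE summxE; apply: eq_bigr => j _.
by rewrite !mxE mulrC.
Qed.

Lemma mul_cv_restr n k (A : 'M['F_2]_(n, k)) (J : {set 'I_k}) (w : inputs k) :
  restr J w = w -> A *m cv w = \sum_(j in J) w j *: col j A.
Proof.
move=> Hw; rewrite mul_cv [RHS]big_mkcond /=; apply: eq_bigr => j _.
by case: ifP => // HjJ; rewrite -Hw restrE HjJ scale0r.
Qed.

Definition kernel_on n k (A : 'M['F_2]_(n, k)) (B : {set 'I_k}) :=
  [set a : inputs k | (restr B a == a) && (A *m cv a == 0)].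

Section KernelOn.
Variables (n k : nat) (A : 'M['F_2]_(n, k)) (B J : {set 'I_k}).
Hypothesis JB : J \subset B.
Hypothesis indepJ : cols_lin_indep A J.
Hypothesis spanJ : forall j, j \in B :\: J -> ~ cols_lin_indep A (j |: J).

Lemma restr_kernel_on_inj : {in kernel_on A B &, injective (restr (B :\: J))}.
Proof.
move=> a a'; rewrite !inE => /andP[/eqP Ha /eqP HAa] /andP[/eqP Ha' /eqP HAa'] Heq.
apply/eqP; rewrite -subr_eq0; apply/eqP; set w := a - a'.
have Hw : restr J w = w.
  apply/ffunP => i; rewrite restrE; case: ifP => // HiJ.
  rewrite /w !ffunE; case HiB: (i \in B).
    have HiD : i \in B :\: J by rewrite inE HiJ HiB.
    by move/ffunP: Heq => /(_ i); rewrite !restrE HiD => ->; rewrite subrr.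
  by rewrite -Ha -Ha' !restrE HiB subrr.
have HAw : A *m cv w = 0 by rewrite cvB mulmxBr HAa HAa' subrr.
move: (indepJ (c := w)); rewrite -mul_cv_restr // => /(_ HAw) Hz.
apply/ffunP => i; rewrite -Hw restrE ffunE; case: ifP => HiJ; last by rewrite ffunE.
by have := Hz i HiJ; rewrite /w !ffunE.
Qed.

Lemma kernel_on_ind j : j \in B :\: J ->
  exists2 e, e \in kernel_on A B & restr (B :\: J) e = ind [set j].
Proof.
move=> HjD; have /setDP [HjB HjJ] := HjD.
have [c Hdep] := not_all_ex_not _ _ (spanJ HjD).
have [Hc /not_all_ex_not [i0 Hi0c]] := imply_to_and _ _ Hdep.
have [Hi0 Hci0] := imply_to_and _ _ Hi0c.
have Hcj : c j = 1.
  have [Hcj0|//] := F2_cases (c j); exfalso.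
  move: Hc; rewrite big_setU1 //= Hcj0 scale0r add0r => /indepJ Hz.
  by apply: Hci0; case/setU1P: Hi0 => [->|/Hz].
exists (restr (j |: J) (finfun c)).
  rewrite inE; apply/andP; split.
    apply/eqP/ffunP => i; rewrite !restrE; case: ifP => // HiB.
    rewrite ffunE; case: ifP => // /setU1P [Eij|HiJ]; first by move: HiB; rewrite Eij HjB.
    by rewrite (subsetP JB _ HiJ) in HiB.
  rewrite (@mul_cv_restr _ _ _ (j |: J)) ?restr_id //.
  by apply/eqP; rewrite -[RHS]Hc; apply: eq_bigr => i Hi; rewrite restrE Hi ffunE.
apply/ffunP => i; rewrite !restrE !ffunE !inE.
have [->|Hij] /= := eqVneq i j; first by rewrite (negbTE HjJ) HjB Hcj.
by case: (i \in J); case: (i \in B).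
Qed.

(* [restr (B :\: J)] is a bijection from [kernel_on A B] onto [F_2^(B :\: J)]. *)
Lemma card_kernel_on : #|kernel_on A B| = (2 ^ #|B :\: J|)%N.
Proof.
set D := B :\: J.
pose E j := odflt 0 [pick e in kernel_on A B | restr D e == ind [set j]].
have HE j : j \in D -> E j \in kernel_on A B /\ restr D (E j) = ind [set j].
  move=> Hj; rewrite /E; case: pickP => [e /andP[He /eqP He2]|Hn] //=.
  by have [e He He2] := kernel_on_ind Hj; move: (Hn e); rewrite He He2 eqxx.
rewrite -card_restr_fixed -(card_in_imset restr_kernel_on_inj); apply: eq_card => d.
rewrite [in RHS]inE; apply/imsetP/idP => [[a _ ->]|/eqP Hd]; first by rewrite restr_id.
pose a := \sum_(j in D) [ffun i => d j * E j i].
have Ha i : a i = \sum_(j in D) d j * E j i.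
  by rewrite /a sum_ffunE; apply: eq_bigr => j _; rewrite ffunE.
exists a.
  rewrite inE; apply/andP; split.
    apply/eqP/ffunP => i; rewrite restrE; case: ifP => // HiB.
    rewrite Ha big1 // => j /HE [HEj _].
    by move: HEj; rewrite inE => /andP[/eqP <- _]; rewrite restrE HiB mulr0.
  have -> : cv a = \sum_(j in D) d j *: cv (E j).
    by apply/matrixP => i l; rewrite mxE Ha summxE; apply: eq_bigr => j _; rewrite !mxE.
  rewrite mulmx_sumr big1 // => j /HE [HEj _].
  by move: HEj; rewrite inE => /andP[_ /eqP HA0]; rewrite -scalemxAr HA0 scaler0.
apply/ffunP => i; rewrite restrE; case: ifP => HiD; last by rewrite -Hd restrE HiD.
rewrite Ha (bigD1 i) //= big1.
  have [_ /ffunP /(_ i)] := HE i HiD.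
  by rewrite restrE HiD !ffunE inE eqxx => ->; rewrite mulr1 addr0.
move=> j /andP[Hj Hji]; have [_ /ffunP /(_ i)] := HE j Hj.
by rewrite restrE HiD !ffunE inE eq_sym (negbTE Hji) => ->; rewrite mulr0.
Qed.

End KernelOn.

Section BinaryBUMAC.
Variables (T : finType) (indep : {set T} -> bool).
Hypothesis HM : is_matroid indep.
Variables (n k : nat) (A : 'M['F_2]_(n, k)) (g : T -> 'I_k).
Hypothesis Hg : bijective g.
Hypothesis Hind : forall S, indep S <-> cols_lin_indep A (g @: S).

Let ginj : injective g := bij_inj Hg.

Lemma card_kernel_on_mrank (S : {set T}) :
  #|kernel_on A (g @: S)| = (2 ^ (#|S| - mrank indep S))%N.
Proof.
have [I /andP[HIS HI] Hr] := mrank_witness HM S.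
have HJB : g @: I \subset g @: S by exact: imsetS.
rewrite Hr (card_kernel_on HJB (proj1 (Hind I) HI)).
  by rewrite cardsD (setIidPr HJB) !(card_imset _ ginj).
move=> j /setDP [/imsetP [x HxS ->] HxI]; rewrite -imsetU1 => /Hind Hx.
have HxI' : x \notin I by apply: contra HxI => /(imset_f g).
have HxIS : x |: I \subset S by rewrite subUset sub1set HxS.
by have := indep_card_le_mrank HxIS Hx; rewrite Hr cardsU1 HxI' ltnn.
Qed.

End BinaryBUMAC.

Section DetChannel.
Variables (n k : nat) (A : 'M['F_2]_(n, k)).

Definition det_channel (x : inputs k) (y : 'cV['F_2]_n) : RR :=
  if y == A *m cv x then 1 else 0.

Lemma det_channel_MAC : is_binary_MAC det_channel.
Proof.
split=> [x y|x]; first by rewrite /det_channel; case: ifP.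
by rewrite (bigD1 (A *m cv x)) //= /det_channel eqxx big1 ?addr0 // => y /negPf ->.
Qed.

Lemma card_det_fibre (B : {set 'I_k}) x0 :
  #|[pred x | (restr (~: B) x == restr (~: B) x0) && (A *m cv x0 == A *m cv x)]|
  = #|kernel_on A B|.
Proof.
rewrite -[LHS](card_imset _ (addIr (- x0))); apply: eq_card => w.
rewrite [in RHS]inE; apply/imsetP/idP.
  move=> [x]; rewrite inE => /andP[/eqP Hx /eqP Hy] ->; apply/andP; split.
    by rewrite -{1}(setCK B) restrC_idE restrB Hx subrr.
  by rewrite cvB mulmxBr Hy subrr.
move=> /andP[Hw1 /eqP Hw2]; exists (w + x0); last by rewrite addrK.
rewrite inE; apply/andP; split.
  rewrite -{1}(setCK B) restrC_idE in Hw1.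
  apply/eqP/ffunP => i; move/eqP/ffunP: Hw1 => /(_ i).
  by rewrite !ffunE; case: (i \in ~: B) => // ->; rewrite add0r.
by rewrite eq_sym -subr_eq0 -mulmxBr -cvB addrK Hw2.
Qed.

Lemma UMIF_det_channel (B : {set 'I_k}) :
  UMIF det_channel B = #|B|%:R - log2 #|kernel_on A B|%:R.
Proof.
have HW := det_channel_MAC; set N := #|kernel_on A B|.
have HN : (0 < N)%N.
  apply/card_gt0P; exists 0; rewrite inE; apply/andP; split.
    by apply/eqP/ffunP => i; rewrite !ffunE; case: ifP.
  by apply/eqP/matrixP => i j; rewrite !mxE big1 // => l _; rewrite !mxE ffunE mulr0.
have Hk : (0 : RR) < (2 ^+ k)^-1 by rewrite invr_gt0 exprn_gt0.
rewrite UMIF_condH //; congr (_ - _).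
have Hterm a b : condH_term det_channel B a b = pXZ det_channel B a b * log2 N%:R.
  rewrite /condH_term; have [->|Hn] := eqVneq (pXZ det_channel B a b) 0.
    by rewrite mul0r.
  have [[x0 y] [Hu0 <- <-]] := pXZ_witness Hn.
  have {Hu0} -> : y = A *m cv x0.
    by move: Hu0; rewrite /det_channel /=; case: (y =P A *m cv x0); rewrite ?eqxx.
  have Hpab :
      pXZ det_channel B (XB B (x0, A *m cv x0)) (ZB B (x0, A *m cv x0)) = (2 ^+ k)^-1.
    rewrite /pXZ (big_pred1 (x0, A *m cv x0)).
      by rewrite /joint /det_channel eqxx mulr1.
    move=> [x z] /=; apply/andP/eqP => [[/eqP Hx /eqP [-> Hr]]|[-> ->]] //.
    by rewrite /XB /= in Hx; rewrite -(restr_splitC B x) -(restr_splitC B x0) Hr Hx.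
  have Hpb : pZ det_channel B (ZB B (x0, A *m cv x0)) = (2 ^+ k)^-1 * N%:R.
    rewrite /pZ (reindex_onto (fun x => (x, A *m cv x0)) fst); last first.
      by move=> [x z] /eqP [-> _].
    rewrite /= /joint /det_channel -mulr_sumr; congr (_ * _).
    rewrite (eq_bigl (fun x => restr (~: B) x == restr (~: B) x0)); last first.
      by move=> x; rewrite eqxx andbT xpair_eqE eqxx.
    by rewrite -big_mkcondr sumr_const /N -(card_det_fibre B x0).
  rewrite Hpab Hpb.
  have -> : (2 ^+ k)^-1 / ((2 ^+ k)^-1 * N%:R) = N%:R^-1 :> RR.
    by rewrite invfM mulrA mulfV ?(gt_eqF Hk) ?mul1r.
  by rewrite log2V ?ltr0n // mulrN opprK.
rewrite /condH (eq_bigr (fun a => \sum_b pXZ det_channel B a b * log2 N%:R)).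
  rewrite -[RHS]mul1r -(sum_pXZ HW B) mulr_suml.
  by apply: eq_bigr => a _; rewrite mulr_suml.
by move=> a _; apply: eq_bigr => b _; exact: Hterm.
Qed.

End DetChannel.


Local Unset Implicit Arguments.

Theorem mainTheorem1 (T : finType) (indep : {set T} -> bool) :
  is_matroid indep -> (0 < #|T|)%N ->
  (BUMAC indep <-> binary_matroid indep).
Proof.
move=> HM HT; split.
  move=> [m [_ [Y [W [HW [f [Hf Hr]]]]]]].
  exact (BUMAC_binary HM HW Hf Hr).
move=> [n [k [A [g [Hg Hind]]]]].
exists k; split; first by rewrite -[k]card_ord -(bij_eq_card Hg).
exists ('cV['F_2]_n : finType), (det_channel A); split; first exact: det_channel_MAC.
exists g; split => // S.
rewrite UMIF_det_channel (card_kernel_on_mrank HM Hg Hind) (card_imset _ (bij_inj Hg)).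
by rewrite natrX log2_2X natrB ?mrank_le_card // opprB addrC subrK.
Qed.
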